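(* If $s\ge4$ and $s$ is even, then $\mathrm{ex}(n,P^{(3)}_s)\ge\left(1-\frac{4}{(s-2)s}+o(1)\right)\binom{n}{3}$, where $o(1)\to0$ as $n\to\infty$ with $s$ fixed.
   Context: An ordered $3$-uniform hypergraph is a $3$-uniform hypergraph with linearly ordered vertex set; $G$ contains $H$ if there is an order-preserving injection $f:V(H)\to V(G)$ with $f(e)\in E(G)$ for all $e\in E(H)$. $\mathrm{ex}(n,H)$ is the maximum number of edges of an $n$-vertex ordered $3$-uniform hypergraph not containing $H$. $P^{(3)}_s$ has vertices $v_1<\dots<v_s$ and edges $\{v_j,v_{j+1},v_{j+2}\}$ for $1\le j\le s-2$. *)

From mathcomp Require Import all_boot all_order all_algebra.
Set Implicit Arguments. Unset Strict Implicit. Unset Printing Implicit Defensive.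
Import Order.TTheory GRing.Theory Num.Theory.

(* An ordered 3-uniform hypergraph on n vertices: vertex set 'I_n with its
   natural (linear) order; edge set E : {set {set 'I_n}}, every edge of size 3. *)
Definition uniform3 (n : nat) (E : {set {set 'I_n}}) : bool :=
  [forall e in E, #|e| == 3].

Definition contains (n k : nat) (G : {set {set 'I_n}}) (H : {set {set 'I_k}}) : bool :=
  [exists f : {ffun 'I_k -> 'I_n},
     [forall i : 'I_k, forall j : 'I_k, (i < j)%N ==> (f i < f j)%N] &&
     [forall e in H, (f @: e) \in G]].

Definition ex (k : nat) (H : {set {set 'I_k}}) (n : nat) : nat :=
  \max_(E : {set {set 'I_n}} | uniform3 E && ~~ contains E H) #|E|.

Definition tight_path (s : nat) : {set {set 'I_s}} :=
  [set e : {set 'I_s} | [exists i : 'I_s,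
      ((i : nat).+2 < s)%N && (e == [set x : 'I_s | ((i : nat) <= x <= (i : nat).+2)%N])]].

From mathcomp Require Import all_boot all_order all_algebra zify ring lra.
Set Implicit Arguments. Unset Strict Implicit. Unset Printing Implicit Defensive.
Import Order.TTheory GRing.Theory Num.Theory.

(* Let k = s/2 and K = k(k-1). For a parameter Q, cut the first KQ vertices
   into (2k-2)Q consecutive slots, grouped into 2k-2 blocks of Q slots; a slot
   of block J holds k-1-J/2 vertices for J even and J/2+1 for J odd. The level
   of a pair x < y is (slot x + slot y) / 2Q, a number below 2k-2, and a < b < c
   is an edge when the level of bc exceeds that of ab. Along a tight path on 2k
   vertices the levels of the 2k-1 consecutive pairs would strictly increase,
   which is impossible. If the middle vertex b of a non-edge lies in slot JQ+t,
   both levels equal J, which confines a to slots JQ-t..JQ+t and c to slots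
   JQ+t..JQ+2Q-t-1. Consecutive block weights sum alternately to k-1 and k, so
   there are at most K(t+1)(Q-t) such non-edges; summing over b gives at most
   K^2 C(Q+2,3) non-edges, asymptotically a 1/K = 4/((s-2)s) fraction of
   C(KQ,3). *)

Lemma sum_nat_range_indicator n lo hi :
  \sum_(0 <= i < n) (lo <= i < hi) = minn n hi - lo.
Proof.
elim: n => [|n IH]; first by rewrite big_geq //; lia.
rewrite big_nat_recr //= IH; case: (leqP lo n) => ?; case: (ltnP n hi) => ? /=; lia.
Qed.

Lemma sum_nat_cut (F : nat -> nat) N n :
  N <= n -> (forall i, N <= i -> F i = 0) ->
  \sum_(0 <= i < n) F i = \sum_(0 <= i < N) F i.
Proof.
move=> le_Nn F0; rewrite (big_cat_nat _ (n := N)) //= [X in _ + X]big_nat_cond.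
by rewrite [X in _ + X]big1 ?addn0 // => i /andP[/andP[/F0]].
Qed.

Lemma sum_nat_blocks (F : nat -> nat) m Q :
  \sum_(0 <= p < m * Q) F p = \sum_(0 <= J < m) \sum_(0 <= t < Q) F (J * Q + t).
Proof.
rewrite big_nat_mul; apply: eq_bigr => J _.
rewrite mulSn addnC -{1}(add0n (J * Q)) big_addn addKn.
by apply: eq_bigr => t _; rewrite addnC.
Qed.

Lemma divn_block J Q i : J * Q <= i < J.+1 * Q -> i %/ Q = J.
Proof.
move=> /andP[lo hi]; have Q_gt0 : 0 < Q by case: Q lo hi => [|?]; rewrite ?muln0.
have -> : i = J * Q + (i - J * Q) by rewrite subnKC.
by rewrite divnMDl // divn_small ?addn0 //; rewrite mulSn in hi; lia.
Qed.

Lemma sum_mid_bin3 m : \sum_(0 <= b < m) b * (m - b.+1) = 'C(m, 3).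
Proof.
elim: m => [|m IH]; first by rewrite big_geq.
rewrite big_nat_recr //= subnn muln0 addn0 binS -IH -bin2_sum -big_split /=.
apply: eq_big_nat => b /andP[_ lt_bm].
by rewrite subSS -subnSK // mulnS addnC.
Qed.

Lemma sum_mid_bin3_shift Q : \sum_(0 <= t < Q) t.+1 * (Q - t) = 'C(Q.+2, 3).
Proof.
rewrite -sum_mid_bin3 big_nat_recl // mul0n add0n big_nat_recr //= subnn muln0 addn0.
by apply: eq_bigr => t _; rewrite !subSS.
Qed.

Lemma mul_bin3 m : 'C(m, 3) * 6 = m * (m - 1) * (m - 2).
Proof.
by rewrite -[6]/(3`!) bin_ffact !ffactnS ffactn0 muln1 -!subn1 -subnDA mulnA.
Qed.

Lemma bin3_le_cube m : 'C(m, 3) * 6 <= m ^ 3.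
Proof. by rewrite mul_bin3; nia. Qed.

Lemma cube_le_bin3 m : m ^ 3 <= 'C(m, 3) * 6 + 3 * m ^ 2.
Proof. by rewrite mul_bin3; nia. Qed.

Section PrefixSums.
Variable w : nat -> nat.

Definition psum p := \sum_(0 <= i < p) w i.

Lemma psumS p : psum p.+1 = psum p + w p.
Proof. by rewrite /psum big_nat_recr. Qed.

Lemma leq_psum p q : p <= q -> psum p <= psum q.
Proof. by move=> le_pq; rewrite /psum [X in _ <= X](big_cat_nat _ (n := p)) //= leq_addr. Qed.

Lemma psumB p q : p <= q -> psum q - psum p = \sum_(p <= i < q) w i.
Proof. by move=> le_pq; rewrite /psum (big_cat_nat _ (n := p) (p := q)) //= addKn. Qed.

Variable P : nat.
Hypothesis P_gt0 : 0 < P.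

Definition slot X := \max_(p < P | psum p <= X) p.

Lemma slot_spec X : exists p : 'I_P, psum p <= X /\ slot X = p.
Proof.
have : 0 < #|[pred p : 'I_P | psum p <= X]|.
  by apply/card_gt0P; exists (Ordinal P_gt0); rewrite inE /psum big_geq.
case/(eq_bigmax_cond (fun p : 'I_P => val p)) => p; rewrite inE => psum_p slot_p.
by exists p.
Qed.

Lemma slot_lt X : slot X < P.
Proof. by have [p [_ ->]] := slot_spec X. Qed.

Lemma psum_slot X : psum (slot X) <= X.
Proof. by have [p [? ->]] := slot_spec X. Qed.

Lemma slot_max X p : p < P -> psum p <= X -> p <= slot X.
Proof.
move=> lt_pP psum_p.
exact: (leq_bigmax_cond (F := fun p : 'I_P => val p) (Ordinal lt_pP)).
Qed.

Lemma psum_slotS X : X < psum P -> X < psum (slot X).+1.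
Proof.
move=> lt_XP; case: (ltnP (slot X).+1 P) => [lt_sP | le_Ps].
  by rewrite ltnNge; apply/negP => /(slot_max lt_sP); rewrite ltnn.
suff -> : (slot X).+1 = P by [].
by apply/anti_leq; rewrite le_Ps slot_lt.
Qed.

Lemma slotE X p : p < P -> psum p <= X < psum p.+1 -> slot X = p.
Proof.
move=> lt_pP /andP[lo hi]; apply/anti_leq; rewrite slot_max // andbT.
rewrite leqNgt; apply/negP => /leq_psum le_ps.
by have := leq_trans le_ps (psum_slot X); rewrite leqNgt hi.
Qed.

Lemma leq_slot X Y : X <= Y -> slot X <= slot Y.
Proof.
by move=> le_XY; apply: slot_max; [exact: slot_lt | exact: leq_trans (psum_slot X) le_XY].
Qed.

Lemma psum_le_of_slot p X : p <= slot X -> psum p <= X.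
Proof. by move/leq_psum/leq_trans; apply; exact: psum_slot. Qed.

Lemma lt_psum_of_slot p X : X < psum P -> slot X < p -> X < psum p.
Proof. by move=> /psum_slotS lt_X /leq_psum; apply: leq_trans. Qed.

Lemma sum_slot (F : nat -> nat) m : m <= P ->
  \sum_(0 <= X < psum m) F (slot X) = \sum_(0 <= p < m) w p * F p.
Proof.
elim: m => [|m IH] le_mP; first by rewrite /psum !big_geq.
rewrite psumS (big_cat_nat _ (n := psum m)) ?leq_addr //= IH 1?ltnW //.
rewrite big_nat_recr //=; congr (_ + _).
rewrite (eq_big_nat _ _ (F2 := fun=> F m)) ?sum_nat_const_nat ?addKn //.
by move=> X range_X; rewrite (@slotE X m) // psumS.
Qed.

End PrefixSums.

Lemma sum_increasing_triples N n : N <= n ->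
  \sum_(0 <= b < n) \sum_(0 <= a < n) \sum_(0 <= c < n) [&& a < b, b < c & c < N]
  = 'C(N, 3).
Proof.
move=> le_Nn; rewrite -sum_mid_bin3 -(@sum_nat_cut _ N n) => [| //| b le_Nb]; last first.
  by rewrite (_ : N - b.+1 = 0) ?muln0 //; lia.
apply: eq_big_nat => b /andP[_ lt_bn].
rewrite (eq_bigr (fun a => (0 <= a < b) * \sum_(0 <= c < n) (b.+1 <= c < N))); last first.
  by move=> a _; rewrite big_distrr; apply: eq_bigr => c _; rewrite -mulnb.
rewrite -big_distrl /= sum_nat_range_indicator.
have := sum_nat_range_indicator n 0 b => /= ->.
by rewrite (minn_idPr (ltnW lt_bn)) (minn_idPr le_Nn) subn0.
Qed.

Definition block_weight k J :=
  if J < 2 * k - 2 then (if J %% 2 == 1 then J %/ 2 + 1 else k - 1 - J %/ 2) else 0.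

Lemma sum_block_weight k : 1 < k ->
  \sum_(0 <= J < 2 * k - 2) block_weight k J = k * (k - 1).
Proof.
move=> k_gt1; have -> : 2 * k - 2 = (k - 1) * 2 by lia.
rewrite sum_nat_blocks (eq_big_nat _ _ (F2 := fun=> k)) ?sum_nat_const_nat ?subn0 1?mulnC //.
move=> i /andP[_ lt_ik]; rewrite !big_nat_recr ?big_geq //= /block_weight.
by do ![case: ifP => ?]; lia.
Qed.

Lemma block_weight_neighbours k J : 1 < k -> J < 2 * k - 2 ->
  ((if J == 0 then 0 else block_weight k J.-1) + block_weight k J)
  * (block_weight k J + block_weight k J.+1) = k * (k - 1).
Proof.
move=> k_gt1 lt_J.
have -> : (if J == 0 then 0 else block_weight k J.-1) + block_weight k J
          = if J %% 2 == 0 then k - 1 else k.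
  by rewrite /block_weight; do ![case: ifP => ?]; lia.
have -> : block_weight k J + block_weight k J.+1 = if J %% 2 == 0 then k else k - 1.
  by rewrite /block_weight; do ![case: ifP => ?]; lia.
by case: ifP; rewrite // mulnC.
Qed.

Definition weight k Q p := block_weight k (p %/ Q).
Definition position k Q := slot (weight k Q) ((2 * k - 2) * Q).
Definition level k Q x y := (position k Q x + position k Q y) %/ (2 * Q).

Definition is_edge k Q a b c :=
  [&& a < b, b < c, c < k * (k - 1) * Q & level k Q a b < level k Q b c].

Section Construction.
Variables k Q : nat.
Hypotheses (k_gt1 : 1 < k) (Q_gt0 : 0 < Q).

Local Notation w := (weight k Q).
Local Notation P := ((2 * k - 2) * Q).
Local Notation N := (k * (k - 1) * Q).
Local Notation pos := (position k Q).
Local Notation lev := (level k Q).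

Lemma nslots_gt0 : 0 < P.
Proof. by rewrite muln_gt0 Q_gt0; lia. Qed.

Lemma weight_block J t : t < Q -> w (J * Q + t) = block_weight k J.
Proof. by move=> lt_tQ; rewrite /weight divnMDl // divn_small ?addn0. Qed.

Lemma sum_weight_in_block J lo hi : J * Q <= lo -> hi <= J.+1 * Q ->
  \sum_(lo <= i < hi) w i = (hi - lo) * block_weight k J.
Proof.
move=> le_lo le_hi.
rewrite (eq_big_nat _ _ (F2 := fun=> block_weight k J)) ?sum_nat_const_nat //.
by move=> i /andP[? ?]; rewrite /weight (@divn_block J) //; apply/andP; split; lia.
Qed.

Lemma psum_weight_total : psum w P = N.
Proof.
rewrite /psum sum_nat_blocks -(mulnC Q) -sum_block_weight // big_distrr /=.
apply: eq_bigr => J _.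
rewrite (eq_big_nat _ _ (F2 := fun=> block_weight k J)) ?sum_nat_const_nat ?subn0 //.
by move=> t /andP[_ ?]; rewrite weight_block.
Qed.

Lemma level_lt x y : lev x y < 2 * k - 2.
Proof.
have := slot_lt (weight k Q) nslots_gt0 x; have := slot_lt (weight k Q) nslots_gt0 y.
rewrite /level /position ltn_divLR ?muln_gt0 // mulnCA; lia.
Qed.

Lemma level_le_block a b : a <= b -> lev a b <= pos b %/ Q.
Proof.
move=> le_ab; rewrite /level -[X in _ <= X](@divnMl 2) //.
by apply: leq_div2r; have := leq_slot (weight k Q) nslots_gt0 le_ab; rewrite /position; lia.
Qed.

Lemma block_le_level b c : b <= c -> pos b %/ Q <= lev b c.
Proof.
move=> le_bc; rewrite /level -[X in X <= _](@divnMl 2) //.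
by apply: leq_div2r; have := leq_slot (weight k Q) nslots_gt0 le_bc; rewrite /position; lia.
Qed.

Lemma psum_weight_left J t : t < Q ->
  psum w (J * Q + t).+1 - psum w (J * Q - t)
    <= t.+1 * ((if J == 0 then 0 else block_weight k J.-1) + block_weight k J).
Proof.
move=> lt_tQ; rewrite psumB; last by lia.
case: eqP => [-> | J_neq0].
  by rewrite mul0n sub0n add0n (@sum_weight_in_block 0) ?subn0 //; lia.
have JQ_eq : J * Q = J.-1.+1 * Q by rewrite prednK //; lia.
rewrite (big_cat_nat _ (n := J * Q)) /=; [|lia|lia].
rewrite (@sum_weight_in_block J.-1) -?JQ_eq; [|lia|lia].
rewrite (@sum_weight_in_block J) //; last by rewrite mulSn; lia.
by rewrite mulnDr leq_add // leq_mul2r; apply/orP; right; lia.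
Qed.

Lemma psum_weight_right J t : t < Q ->
  psum w (J * Q + 2 * Q - t) - psum w (J * Q + t)
    = (Q - t) * (block_weight k J + block_weight k J.+1).
Proof.
move=> lt_tQ; rewrite psumB; last by lia.
rewrite (big_cat_nat _ (n := J.+1 * Q)) /=; [|rewrite mulSn; lia|rewrite mulSn; lia].
rewrite (sum_weight_in_block (leq_addr _ _) (leqnn _)).
rewrite (sum_weight_in_block (leqnn _)); last by rewrite !mulSn; lia.
have -> : J * Q + 2 * Q - t - J.+1 * Q = Q - t by rewrite mulSn; lia.
have -> : J.+1 * Q - (J * Q + t) = Q - t by rewrite mulSn; lia.
by rewrite mulnDr.
Qed.

Lemma non_edge_window a b c J t :
  [&& a < b, b < c & c < N] -> ~~ (lev a b < lev b c) -> pos b = J * Q + t -> t < Q ->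
  psum w (J * Q - t) <= a /\ c < psum w (J * Q + 2 * Q - t).
Proof.
move=> /and3P[lt_ab lt_bc lt_cN] not_lt pos_b lt_tQ.
have block_b : pos b %/ Q = J by rewrite pos_b divnMDl // divn_small ?addn0.
have := level_le_block (ltnW lt_ab); have := block_le_level (ltnW lt_bc).
rewrite block_b => le_J_bc le_ab_J.
have : J <= lev a b by lia.
have : lev b c < J.+1 by lia.
rewrite /level ltn_divLR ?leq_divRL ?muln_gt0 // -/(pos a) -/(pos b) -/(pos c).
rewrite mulSn (mulnCA J 2 Q) pos_b => hi lo; split.
  by apply: (psum_le_of_slot nslots_gt0); rewrite -/(pos a); lia.
apply: (lt_psum_of_slot nslots_gt0); first by rewrite psum_weight_total.
by rewrite -/(pos c); lia.
Qed.

Lemma non_edges_at n b : b < N ->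
  \sum_(0 <= a < n) \sum_(0 <= c < n) [&& a < b, b < c, c < N & ~~ (lev a b < lev b c)]
    <= k * (k - 1) * ((pos b %% Q).+1 * (Q - pos b %% Q)).
Proof.
move=> lt_bN; set t := pos b %% Q; set J := pos b %/ Q.
have lt_tQ : t < Q by rewrite ltn_pmod.
have pos_b : pos b = J * Q + t by rewrite /t /J -divn_eq.
have lt_J : J < 2 * k - 2 by rewrite ltn_divLR //; apply: slot_lt nslots_gt0 _.
set lo := psum w (J * Q - t); set hi := psum w (J * Q + 2 * Q - t).
apply: (@leq_trans (\sum_(0 <= a < n) \sum_(0 <= c < n) ((lo <= a < b) * (b.+1 <= c < hi)))).
  apply: leq_sum => a _; apply: leq_sum => c _.
  case E: [&& _, _, _ & _] => //; move/and4P: E => [lt_ab lt_bc lt_cN not_lt].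
  have triple : [&& a < b, b < c & c < N] by rewrite lt_ab lt_bc.
  have [le_lo lt_hi] := non_edge_window triple not_lt pos_b lt_tQ.
  by rewrite le_lo lt_ab lt_bc lt_hi.
rewrite (eq_bigr (fun a => (lo <= a < b) * \sum_(0 <= c < n) (b.+1 <= c < hi))); last first.
  by move=> a _; rewrite big_distrr.
rewrite -big_distrl /= !sum_nat_range_indicator.
have le_pb : psum w (pos b) <= b := psum_slot _ nslots_gt0 b.
have lt_bp : b < psum w (pos b).+1.
  by apply: (psum_slotS nslots_gt0); rewrite psum_weight_total.
apply: (@leq_trans ((psum w (J * Q + t).+1 - lo) * (hi - psum w (J * Q + t)))).
  by rewrite -pos_b; apply: leq_mul; lia.
rewrite psum_weight_right //; apply: leq_trans (leq_mul (psum_weight_left J lt_tQ) (leqnn _)) _.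
by rewrite mulnACA block_weight_neighbours // mulnC.
Qed.

Lemma sum_non_edges n : N <= n ->
  \sum_(0 <= b < n) \sum_(0 <= a < n) \sum_(0 <= c < n)
      [&& a < b, b < c, c < N & ~~ (lev a b < lev b c)]
    <= k * (k - 1) * (k * (k - 1) * 'C(Q.+2, 3)).
Proof.
move=> le_Nn; pose G p := k * (k - 1) * ((p %% Q).+1 * (Q - p %% Q)).
rewrite (@sum_nat_cut _ N n) // => [|b le_Nb]; last first.
  rewrite big1 // => a _; rewrite big1 // => c _; case: (ltnP b c) => lt_bc; rewrite ?andbF //=.
  by rewrite [c < N]ltnNge (leq_trans le_Nb (ltnW lt_bc)) andbF.
apply: (@leq_trans (\sum_(0 <= b < N) G (pos b))).
  rewrite big_nat_cond [X in _ <= X]big_nat_cond.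
  by apply: leq_sum => b /andP[/andP[_ ?] _]; apply: non_edges_at.
rewrite -{1}psum_weight_total sum_slot ?nslots_gt0 // sum_nat_blocks.
rewrite (eq_bigr (fun J => block_weight k J * (k * (k - 1) * 'C(Q.+2, 3)))).
  by rewrite -big_distrl /= sum_block_weight.
move=> J _; rewrite -sum_mid_bin3_shift big_distrr /= big_distrr /=.
by apply: eq_big_nat => t /andP[_ lt_tQ]; rewrite weight_block // /G modnMDl modn_small.
Qed.

Lemma edges_lower_bound n : N <= n ->
  'C(N, 3) <= \sum_(0 <= b < n) \sum_(0 <= a < n) \sum_(0 <= c < n) is_edge k Q a b c
              + k * (k - 1) * (k * (k - 1) * 'C(Q.+2, 3)).
Proof.
move=> le_Nn; rewrite -(sum_increasing_triples le_Nn).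
apply: leq_trans (leq_add (leqnn _) (sum_non_edges le_Nn)).
rewrite -big_split; apply: leq_sum => b _; rewrite -big_split; apply: leq_sum => a _.
rewrite -big_split; apply: leq_sum => c _ /=; rewrite /is_edge.
by case: (a < b) (b < c) (c < N) (lev a b < lev b c) => [] [] [] [].
Qed.

End Construction.

Definition level_hypergraph n k Q : {set {set 'I_n}} :=
  [set [set t.1.1; t.1.2; t.2]
    | t in [set t : 'I_n * 'I_n * 'I_n | is_edge k Q t.1.1 t.1.2 t.2]].

Lemma set3_inj n (a b c a' b' c' : 'I_n) : a < b < c -> a' < b' < c' ->
  [set a; b; c] = [set a'; b'; c'] -> [/\ a = a', b = b' & c = c'].
Proof.
move=> /andP[lt_ab lt_bc] /andP[lt_ab' lt_bc'] eq_abc.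
have mem_a' : a' \in [set a; b; c] by rewrite eq_abc !inE eqxx.
have mem_c' : c' \in [set a; b; c] by rewrite eq_abc !inE eqxx !orbT.
have mem_a : a \in [set a'; b'; c'] by rewrite -eq_abc !inE eqxx.
have mem_b : b \in [set a'; b'; c'] by rewrite -eq_abc !inE eqxx !orbT.
have mem_c : c \in [set a'; b'; c'] by rewrite -eq_abc !inE eqxx !orbT.
move: mem_a' mem_c' mem_a mem_b mem_c; rewrite !inE -!(inj_eq val_inj) /= => ? ? ? ? ?.
by split; apply: val_inj => /=; lia.
Qed.

Lemma card_level_hypergraph n k Q : #|level_hypergraph n k Q| =
  \sum_(0 <= b < n) \sum_(0 <= a < n) \sum_(0 <= c < n) is_edge k Q a b c.
Proof.
rewrite card_in_imset => [|[[a b] c] [[a' b'] c']]; last first.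
  rewrite !inE /= => /and4P[lt_ab lt_bc _ _] /and4P[lt_ab' lt_bc' _ _].
  by case/set3_inj; rewrite ?lt_ab ?lt_bc ?lt_ab' ?lt_bc' // => -> -> ->.
rewrite exchange_big_nat /= big_mkord.
under eq_bigr do rewrite big_mkord; under eq_bigr do under eq_bigr do rewrite big_mkord.
rewrite pair_big pair_big -sum1_card big_mkcond /=.
by apply: eq_bigr => -[[a b] c] _; rewrite inE.
Qed.

Lemma level_hypergraph_uniform n k Q : uniform3 (level_hypergraph n k Q).
Proof.
apply/forall_inP => e /imsetP[[[a b] c]]; rewrite inE => /and4P[lt_ab lt_bc _ _] ->.
rewrite setUC cardsU1 cards2 !inE -!(inj_eq val_inj) /=.
by move: lt_ab lt_bc => /= ? ?; lia.
Qed.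

Lemma strict_chain_index (lev : nat -> nat -> nat) (f : nat -> nat) m :
  (forall i, i.+2 < m -> lev (f i) (f i.+1) < lev (f i.+1) (f i.+2)) ->
  forall i, i.+1 < m -> i <= lev (f i) (f i.+1).
Proof.
move=> chain; elim=> [//|i IH] lt_im.
by apply: leq_ltn_trans (IH (ltnW lt_im)) (chain i lt_im).
Qed.

Lemma level_hypergraph_tight_path_free n k Q s : 1 < k -> 0 < Q -> 2 * k <= s ->
  ~~ contains (level_hypergraph n k Q) (tight_path s).
Proof.
move=> k_gt1 Q_gt0; case: s => [|s] le_s; first by lia.
apply/existsP => -[f /andP[/forallP f_incr /forall_inP f_edges]].
pose g i := val (f (inord i)).
have g_incr i : i < s -> g i < g i.+1.
  move=> lt_is; have /forallP/(_ (inord i.+1))/implyP := f_incr (inord i); apply.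
  by rewrite !inordK //; lia.
have g_chain i : i.+2 < s.+1 -> level k Q (g i) (g i.+1) < level k Q (g i.+1) (g i.+2).
  move=> lt_is; pose e := [set x : 'I_s.+1 | i <= x <= i.+2].
  have e_path : e \in tight_path s.+1.
    by rewrite inE; apply/existsP; exists (inord i); rewrite inordK ?lt_is ?eqxx //; lia.
  have e_eq : e = [set inord i; inord i.+1; inord i.+2].
    by apply/setP => x; rewrite !inE -!(inj_eq val_inj) /= !inordK; lia.
  have /imsetP[[[a b] c]] := f_edges e e_path; rewrite inE => /and4P[lt_ab lt_bc _ lt_lev].
  rewrite e_eq !imsetU !imset_set1 => /set3_inj [].
    by rewrite g_incr 1?g_incr //; lia.
    by rewrite lt_ab.
  by rewrite /g => -> -> ->.
have lt_s : s.-1.+1 < s.+1 by lia.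
have := strict_chain_index g_chain lt_s.
by have := level_lt k_gt1 Q_gt0 (g s.-1) (g s.-1.+1); lia.
Qed.

Local Open Scope ring_scope.

Lemma density_bound (R : realFieldType) (K Q n g : nat) (eps : R) :
  (0 < K)%N -> 10 <= eps * Q%:R -> (n < K * Q.+1)%N ->
  ('C(K * Q, 3) <= g + K * (K * 'C(Q.+2, 3)))%N ->
  (1 - K%:R^-1 - eps) * 'C(n, 3)%:R <= g%:R.
Proof.
move=> K_gt0 eps_Q lt_n edges.
have bin_n : ('C(n, 3) * 6 <= (K * Q.+1) ^ 3)%N.
  by rewrite (leq_trans (bin3_le_cube n)) ?leq_exp2r ?(ltnW lt_n).
have bin_KQ := cube_le_bin3 (K * Q).
have bin_Q : ('C(Q.+2, 3) * 6 = Q.+2 * Q.+1 * Q)%N by rewrite mul_bin3 !subSS !subn0.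
set k : R := K%:R; set q : R := Q%:R.
have {}bin_n : 'C(n, 3)%:R * 6 <= (k * (q + 1)) ^+ 3.
  by move: bin_n; rewrite -(ler_nat R) natrM natrX natrM -[Q.+1]addn1 natrD.
have {}bin_KQ : (k * q) ^+ 3 <= 'C(K * Q, 3)%:R * 6 + 3 * (k * q) ^+ 2.
  by move: bin_KQ; rewrite -(ler_nat R) natrD !natrX !natrM.
have {}bin_Q : 'C(Q.+2, 3)%:R * 6 = (q + 2) * (q + 1) * q.
  by move/eqP: bin_Q; rewrite -(eqr_nat R) !natrM -[Q.+2]addn2 -[Q.+1]addn1 !natrD => /eqP.
have {}edges : 'C(K * Q, 3)%:R <= g%:R + k * (k * 'C(Q.+2, 3)%:R).
  by move: edges; rewrite -(ler_nat R) natrD !natrM.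
have k_ge1 : 1 <= k by rewrite ler1n.
have q_ge0 : 0 <= q by rewrite ler0n.
have eps_gt0 : 0 < eps by rewrite lt_def; apply/andP; split; [apply/eqP => eps0 | ]; nra.
set c := 1 - k^-1 - eps.
have [c_le0 | c_gt0] := lerP c 0.
  exact: le_trans (mulr_le0_ge0 c_le0 (ler0n _ _)) (ler0n _ _).
have kc : k * c = k - 1 - eps * k by rewrite /c; field; lra.
have poly : (k - 1 - eps * k) * (q + 1) ^+ 3 <= k * q ^+ 3 - 6 * q ^+ 2 - q ^+ 3 - 2 * q.
  have : 10 * (q + 1) ^+ 2 <= eps * (q + 1) ^+ 3 by nra.
  nra.
have k_gt0 : 0 < k by lra.
have kc_gt0 : 0 < k * c by rewrite mulr_gt0.
have shrink_n := ler_wpM2l (ltW kc_gt0) bin_n; rewrite kc in shrink_n.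
have expand := ler_wpM2l (exprn_ge0 3 (ltW k_gt0)) poly.
have count : (k * q) ^+ 3 - 3 * (k * q) ^+ 2 - k ^+ 2 * ((q + 2) * (q + 1) * q) <= 6 * g%:R.
  by rewrite -bin_Q; lra.
have count_k := ler_wpM2l (ltW k_gt0) count.
rewrite -(ler_pM2l k_gt0) -(ler_pM2r (_ : 0 < 6)) // mulrA kc.
lra.
Qed.

Lemma exists_nat_mulr_ge (R : archiNumFieldType) (x eps : R) : 0 <= x -> 0 < eps ->
  exists2 m : nat, (0 < m)%N & x <= eps * m%:R.
Proof.
move=> x_ge0 eps_gt0; exists (Num.Def.archi_bound (x / eps)).+1 => //.
have /archi_boundP lt_bound : 0 <= x / eps by rewrite divr_ge0 // ltW.
rewrite -ler_pdivrMl // mulrC; apply: le_trans (ltW lt_bound) _.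
by rewrite ler_nat.
Qed.

Theorem corollary4p6 (s : nat) :
  (4 <= s)%N -> ~~ odd s ->
  forall eps : rat, 0 < eps ->
  exists N : nat, forall n : nat, (N <= n)%N ->
    (1 - 4 / (((s - 2)%N)%:R * s%:R) - eps) * ('C(n, 3))%:R
      <= (ex (tight_path s) n)%:R :> rat.
Proof.
move=> s_ge4 s_even eps eps_gt0.
pose k := (s %/ 2)%N; pose K := (k * (k - 1))%N.
have s_eq : s = (2 * k)%N by rewrite /k mulnC divnK ?dvdn2.
have k_gt1 : (1 < k)%N by lia.
have K_gt0 : (0 < K)%N by rewrite muln_gt0; lia.
have -> : 4 / (((s - 2)%N)%:R * s%:R) = K%:R^-1 :> rat.
  rewrite -natrM (_ : (s - 2) * s = 4 * K)%N; last by rewrite /K s_eq; nia.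
  by rewrite natrM invfM mulrA divff ?mul1r.
have [Q0 Q0_gt0 eps_Q0] := @exists_nat_mulr_ge _ 10 eps (ler0n _ _) eps_gt0.
exists (K * Q0)%N => n le_n; pose Q := (n %/ K)%N.
have le_Q : (Q0 <= Q)%N by rewrite leq_divRL // mulnC.
have le_KQ : (K * Q <= n)%N by rewrite mulnC leq_divM.
have lt_n : (n < K * Q.+1)%N by rewrite mulnC ltn_ceil.
have ex_ge : (#|level_hypergraph n k Q| <= ex (tight_path s) n)%N.
  apply: (leq_bigmax_cond (F := fun E : {set {set 'I_n}} => #|E|)).
  by rewrite level_hypergraph_uniform level_hypergraph_tight_path_free ?s_eq //; lia.
apply: le_trans (_ : _ <= #|level_hypergraph n k Q|%:R) _; last by rewrite ler_nat.
apply: density_bound lt_n _ => //.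
  by apply: le_trans eps_Q0 _; rewrite ler_pM2l // ler_nat.
by rewrite card_level_hypergraph; apply: edges_lower_bound => //; lia.
Qed.
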